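(* Let $k,a,b$ be positive real numbers and $\{S^{(a,b)}_{k,n}\}_{n\ge0}$ the $k$-FL sequence. For any integers $m\ge n\ge0$, $S^{(a,b)}_{k,m}S^{(a,b)}_{k,n+1}-S^{(a,b)}_{k,m+1}S^{(a,b)}_{k,n}=(-1)^n\{a^2-(k^2+4)b^2\}F_{k,m-n}$.
   Context: The $k$-FL sequence (for positive reals $k,a,b$) is $S^{(a,b)}_{k,0}=2b$, $S^{(a,b)}_{k,1}=bk+a$, $S^{(a,b)}_{k,n}=kS^{(a,b)}_{k,n-1}+S^{(a,b)}_{k,n-2}$. $F_{k,n}$ is the $k$-Fibonacci sequence: $F_{k,0}=0$, $F_{k,1}=1$, $F_{k,n}=kF_{k,n-1}+F_{k,n-2}$. *)

From Stdlib Require Import Reals.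
Open Scope R_scope.

Fixpoint kfib (k : R) (n : nat) : R :=
  match n with
  | O => 0
  | S O => 1
  | S ((S p) as q) => k * kfib k q + kfib k p
  end.

Fixpoint kFL (k a b : R) (n : nat) : R :=
  match n with
  | O => 2 * b
  | S O => b * k + a
  | S ((S p) as q) => k * kFL k a b q + kFL k a b p
  end.

(* The Casoratian W(n, d) = S_{n+d} S_{n+1} - S_{n+d+1} S_n of any solution of
   u_{j+2} = k u_{j+1} + u_j changes sign when n increases by one, so
   W(n, d) = (-1)^n W(0, d).  As a function of d, W(0, d) solves the same
   recurrence and vanishes at d = 0, hence equals W(0, 1) F_{k,d}.  For the
   k-FL sequence W(0, 1) = S_1^2 - S_2 S_0 = a^2 - (k^2 + 4) b^2. *)

From Stdlib Require Import Reals Lia.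
Open Scope R_scope.

Section KRecurrence.

Variable k : R.

Definition krec (u : nat -> R) : Prop :=
  forall n, u (S (S n)) = k * u (S n) + u n.

Lemma kfib_krec : krec (kfib k).
Proof. intros n; reflexivity. Qed.

Lemma krec_scale (c : R) (u : nat -> R) : krec u -> krec (fun n => c * u n).
Proof. intros Hu n; rewrite Hu; ring. Qed.

Lemma krec_eq (u v : nat -> R) :
  krec u -> krec v -> u 0%nat = v 0%nat -> u 1%nat = v 1%nat ->
  forall n, u n = v n.
Proof.
  intros Hu Hv H0 H1 n.
  assert (Hpair : u n = v n /\ u (S n) = v (S n)).
  { induction n as [|n [IH IHS]]; [split; assumption|].
    split; [exact IHS|].
    rewrite Hu, Hv, IH, IHS; reflexivity. }
  exact (proj1 Hpair).
Qed.

Lemma krec_eq_kfib (u : nat -> R) :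
  krec u -> u 0%nat = 0 -> forall n, u n = u 1%nat * kfib k n.
Proof.
  intros Hu H0.
  apply krec_eq; [exact Hu | exact (krec_scale _ _ kfib_krec) | |]; simpl.
  - rewrite H0; ring.
  - ring.
Qed.

Definition casoratian (u : nat -> R) (n d : nat) : R :=
  u (n + d)%nat * u (S n) - u (S (n + d)) * u n.

Lemma casoratian_succ (u : nat -> R) (n d : nat) :
  krec u -> casoratian u (S n) d = - casoratian u n d.
Proof.
  intros Hu; unfold casoratian; simpl plus.
  rewrite (Hu n), (Hu (n + d)%nat); ring.
Qed.

Lemma casoratian_sign (u : nat -> R) (n d : nat) :
  krec u -> casoratian u n d = (-1) ^ n * casoratian u 0 d.
Proof.
  intros Hu; induction n as [|n IH]; simpl.
  - ring.
  - rewrite casoratian_succ, IH by exact Hu; ring.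
Qed.

Lemma casoratian0_krec (u : nat -> R) : krec u -> krec (casoratian u 0).
Proof.
  intros Hu d; unfold casoratian; simpl plus.
  rewrite (Hu (S d)), (Hu d); ring.
Qed.

Lemma casoratian0_kfib (u : nat -> R) (d : nat) :
  krec u -> casoratian u 0 d = casoratian u 0 1 * kfib k d.
Proof.
  intros Hu; apply krec_eq_kfib; [exact (casoratian0_krec u Hu)|].
  unfold casoratian; simpl; ring.
Qed.

End KRecurrence.

Lemma kFL_krec (k a b : R) : krec k (kFL k a b).
Proof. intros n; reflexivity. Qed.

Lemma kFL_casoratian01 (k a b : R) :
  casoratian (kFL k a b) 0 1 = a ^ 2 - (k ^ 2 + 4) * b ^ 2.
Proof. unfold casoratian; simpl; ring. Qed.

Theorem theorem4p21 (k a b : R) (hk : 0 < k) (ha : 0 < a) (hb : 0 < b)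
  (m n : nat) (hmn : (n <= m)%nat) :
  kFL k a b m * kFL k a b (S n) - kFL k a b (S m) * kFL k a b n
  = (-1) ^ n * (a ^ 2 - (k ^ 2 + 4) * b ^ 2) * kfib k (m - n).
Proof.
  replace m with (n + (m - n))%nat at 1 2 by lia.
  change (casoratian (kFL k a b) n (m - n)
          = (-1) ^ n * (a ^ 2 - (k ^ 2 + 4) * b ^ 2) * kfib k (m - n)).
  rewrite (casoratian_sign k), (casoratian0_kfib k), kFL_casoratian01
    by exact (kFL_krec k a b).
  ring.
Qed.
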